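(* Let $c$ be a parameter and let $$\Psi(x,\hbar):=\sum_{j\ge0}s_{(j)}(\tilde{\mathbf t}/\hbar)\,e^{\frac\hbar2j(j-1)}x^j\quad\text{with }\tilde t_k=c^{k-1}\ (k\ge1).$$ Then, with $\hat x=x\cdot$, $\hat y=\hbar x\frac{\partial}{\partial x}$, $$\Big(\frac{\hat xe^{\hat y}}{(1-c\,\hat xe^{\hat y})^2}-\hat y\Big)\Psi=0\quad\text{and}\quad\Big(1-\big(e^{-\hat y}\hat x^{-1}-2c+c^2\hat xe^{\hat y}\big)\hat y\Big)\Psi(x,\hbar)=0.$$ For $c=0$ this reduces to $(e^{-\hat y}\hat x^{-1}\hat y-1)\Psi=0$ for the wave function of single Hurwitz numbers.
   Context: $s_{(j)}$ is defined by $\exp(\sum_{m\ge1}t_mx^m)=\sum_{j\ge0}s_{(j)}(\mathbf t)x^j$ and $\tilde{\mathbf t}/\hbar=(\tilde t_1/\hbar,\tilde t_2/\hbar,\dots)$. The operator $(1-c\hat xe^{\hat y})^{-2}$ is expanded as a power series in $c\hat xe^{\hat y}$; $e^{\pm\hat y}$ acts on $x^m$ by multiplication by $e^{\pm\hbar m}$; all series are formal in $x,\hbar,c$. *)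

From HB Require Import structures.
From mathcomp Require Import all_boot all_order all_algebra.
Set Implicit Arguments. Unset Strict Implicit. Unset Printing Implicit Defensive.
Import Order.TTheory GRing.Theory Num.Theory.
Local Open Scope ring_scope.

(* Coefficients live in a field F of characteristic 0
   (the parameter c is an arbitrary element of F; taking
   F = {fraction {poly rat}} and c = 'X gives the "formal in c" case). *)

Section FormalSeries.
Variable F : fieldType.

(* ---------- formal Laurent series in hbar ----------
   LSer v f  represents  hbar^v * sum_{n>=0} f n hbar^n. *)
Record lser := LSer { lval : int; lcoef : nat -> F }.

Definition lcoefz (s : lser) (k : int) : F :=
  if (lval s <= k)%R then lcoef s `|k - lval s|%N else 0.

Definition lzero : lser := LSer 0 (fun _ => 0).
Definition lconst (a : F) : lser := LSer 0 (fun n => if n == 0%N then a else 0).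
Definition lhbar : lser := LSer 1 (fun n => if n == 0%N then 1 else 0).
Definition lhbarinv : lser := LSer (-1) (fun n => if n == 0%N then 1 else 0).
Definition lexp (a : F) : lser := LSer 0 (fun n => a ^+ n / (n`!)%:R).
Definition ladd (s t : lser) : lser :=
  let v := Order.min (lval s) (lval t) in
  LSer v (fun n => lcoefz s (v + n%:Z) + lcoefz t (v + n%:Z)).
Definition lopp (s : lser) : lser := LSer (lval s) (fun n => - lcoef s n).
Definition lscale (a : F) (s : lser) : lser := LSer (lval s) (fun n => a * lcoef s n).
Definition lmul (s t : lser) : lser :=
  LSer (lval s + lval t)
       (fun n => \sum_(i < n.+1) lcoef s i * lcoef t (n - i)%N).
Definition lsum (l : seq lser) : lser := foldr ladd lzero l.

(* ---------- formal power series in x with hbar-Laurent coefficients ----------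
   G : nat -> lser,  G N = coefficient of x^N. *)
Definition xunit : nat -> lser := fun j => if j == 0%N then lconst 1 else lzero.
Definition xmul (f g : nat -> lser) : nat -> lser :=
  fun j => lsum [seq lmul (f i) (g (j - i)%N) | i <- iota 0 j.+1].
Definition xpow (f : nat -> lser) (k : nat) : nat -> lser := iter k (xmul f) xunit.
(* exp of a power series f with f 0 = 0: the x^j coefficient of
   sum_k f^k / k!  (terms with k > j do not contribute) *)
Definition xexp (f : nat -> lser) : nat -> lser :=
  fun j => lsum [seq lscale ((k`!)%:R)^-1 (xpow f k j) | k <- iota 0 j.+1].

Definition schur_row (t : nat -> lser) (j : nat) : lser :=
  xexp (fun m => if m == 0%N then lzero else t m) j.

Definition ttilde_hbar (c : F) (k : nat) : lser := lmul (lconst (c ^+ k.-1)) lhbarinv.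

Definition Psi (c : F) : nat -> lser :=
  fun j => lmul (schur_row (ttilde_hbar c) j) (lexp ((j * (j - 1))%N%:R / 2)).

Definition xadd (G H : nat -> lser) : nat -> lser := fun N => ladd (G N) (H N).
Definition xopp (G : nat -> lser) : nat -> lser := fun N => lopp (G N).
Definition xscale (a : F) (G : nat -> lser) : nat -> lser := fun N => lscale a (G N).
Definition op_y (G : nat -> lser) : nat -> lser := fun N => lmul lhbar (lscale N%:R (G N)).
Definition op_ey (a : int) (G : nat -> lser) : nat -> lser :=
  fun N => lmul (lexp ((a * N%:Z)%:~R)) (G N).
Definition op_x (G : nat -> lser) : nat -> lser :=
  fun N => if N is N'.+1 then G N' else lzero.
(* xhat^{-1}; only applied to series with vanishing x^0 coefficient
   (namely yhat Psi), so dropping the x^{-1} term is exact *)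
Definition op_xinv (G : nat -> lser) : nat -> lser := fun N => G N.+1.
Definition op_xey (G : nat -> lser) : nat -> lser := op_x (op_ey 1 G).
(* (1 - c xhat e^{yhat})^{-2} = sum_n (n+1) (c xhat e^{yhat})^n ;
   on power series in x only n <= N contributes to x^N *)
Definition op_geom2 (c : F) (G : nat -> lser) : nat -> lser :=
  fun N => lsum [seq lscale ((n.+1)%:R * c ^+ n) (iter n op_xey G N) | n <- iota 0 N.+1].

Definition xzero (G : nat -> lser) : Prop := forall (N : nat) (k : int), lcoefz (G N) k = 0.

End FormalSeries.

From HB Require Import structures.
From mathcomp Require Import all_boot all_order all_algebra.
From mathcomp Require Import zify ring.
Import Order.TTheory GRing.Theory Num.Theory.
Local Open Scope ring_scope.
Set Implicit Arguments. Unset Strict Implicit. Unset Printing Implicit Defensive.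

(* The x^N coefficient of Psi is exp('C(N, 2) hbar) s_N(hbar).  Each operator in
   the statement shifts N and multiplies by some exp(m hbar); as
   exp(a hbar) exp(b hbar) = exp((a + b) hbar) and N + 'C(N, 2) = 'C(N + 1, 2),
   all exponential factors cancel.  What remains are identities between the s_N:
   with y = x / (1 - c x) one has sum_N s_N x^N = exp(y / hbar) and
   (1 - c x)^2 y' = 1, whence
     s_M = hbar ((M + 1) s_(M+1) - 2 c M s_M + c^2 (M - 1) s_(M-1)).
   This is the second equation, its case c = 0 is the third, and inverting
   (1 - c x)^2 turns it into the first. *)

Lemma eq_sum_nat_vanishing (V : nmodType) (h : nat -> V) W1 W2 :
  (forall n, (W1 <= n)%N -> h n = 0) -> (forall n, (W2 <= n)%N -> h n = 0) ->
  \sum_(0 <= n < W1) h n = \sum_(0 <= n < W2) h n.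
Proof.
wlog le12 : W1 W2 / (W1 <= W2)%N.
  move=> wlog_le h1 h2; case: (leqP W1 W2) => l; first exact: wlog_le.
  by symmetry; apply: wlog_le => //; exact: ltnW.
move=> h1 _; rewrite (big_cat_nat (leq0n W1) le12) /=.
rewrite [X in _ = _ + X]big_nat_cond [X in _ = _ + X]big1 ?addr0 //.
by move=> i /andP[/andP[hi _] _]; exact: h1.
Qed.

Lemma sum_nat_single (V : nmodType) (h : nat -> V) m W :
  (m < W)%N -> (forall n, n <> m -> h n = 0) -> \sum_(0 <= n < W) h n = h m.
Proof.
move=> ltmW h0; rewrite big_mkord (bigD1 (Ordinal ltmW)) //= big1 ?addr0 // => i /eqP neq.
by apply: h0 => e; apply: neq; exact: val_inj.
Qed.

Lemma sum_nat_triangle (V : nmodType) (h : nat -> nat -> V) T :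
  \sum_(0 <= p < T) \sum_(0 <= n < p.+1) h n (p - n)%N =
  \sum_(0 <= n < T) \sum_(0 <= m < T - n) h n m.
Proof.
elim: T => [|T IH]; first by rewrite !big_geq.
rewrite big_nat_recr //= IH.
transitivity (\sum_(0 <= n < T.+1) (\sum_(0 <= m < T - n) h n m + h n (T - n)%N)); last first.
  by apply: eq_big_nat => n /andP[_ hn]; rewrite subSn // big_nat_recr.
rewrite big_split /=; congr (_ + _).
by rewrite [RHS]big_nat_recr //= subnn [X in _ = _ + X]big_geq // addr0.
Qed.

Lemma iota0E n : iota 0 n = index_iota 0 n.
Proof. by rewrite /index_iota subn0. Qed.

Section LaurentSeries.
Variable F : fieldType.
Implicit Types (s t : lser F) (a : F) (k : int).

Lemma lcoefz_lt s k : k < lval s -> lcoefz s k = 0.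
Proof. by rewrite /lcoefz ltNge => /negbTE ->. Qed.

Lemma lcoefz_val s (n : nat) : lcoefz s (lval s + n%:Z) = lcoef s n.
Proof. by rewrite /lcoefz ifT; [congr lcoef|]; lia. Qed.

Lemma lcoefzD s t k : lcoefz (ladd s t) k = lcoefz s k + lcoefz t k.
Proof.
rewrite {1}/lcoefz /=; case: ifP => hv.
  by have -> : Order.min (lval s) (lval t) + (absz (k - Order.min (lval s) (lval t)))%:Z = k by lia.
by rewrite !lcoefz_lt ?addr0 //; lia.
Qed.

Lemma lcoefz0 k : lcoefz (lzero F) k = 0.
Proof. by rewrite /lcoefz /=; case: ifP. Qed.

Lemma lcoefzN s k : lcoefz (lopp s) k = - lcoefz s k.
Proof. by rewrite /lcoefz /=; case: ifP; rewrite ?oppr0. Qed.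

Lemma lcoefzZ a s k : lcoefz (lscale a s) k = a * lcoefz s k.
Proof. by rewrite /lcoefz /=; case: ifP; rewrite ?mulr0. Qed.

Lemma lcoefz_lsum (T : Type) (r : seq T) (f : T -> lser F) k :
  lcoefz (lsum [seq f i | i <- r]) k = \sum_(i <- r) lcoefz (f i) k.
Proof.
elim: r => [|x r IH]; first by rewrite big_nil lcoefz0.
by rewrite big_cons /= lcoefzD IH.
Qed.

Lemma lcoefzC a k : lcoefz (lconst a) k = if k == 0 then a else 0.
Proof. by rewrite /lcoefz /=; repeat case: ifP => ?; try done; lia. Qed.

Lemma lcoefz_hbar k : lcoefz (lhbar F) k = if k == 1 then 1 else 0.
Proof. by rewrite /lcoefz /=; repeat case: ifP => ?; try done; lia. Qed.

Lemma lcoefz_hbarinv k : lcoefz (lhbarinv F) k = if k == -1 then 1 else 0.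
Proof. by rewrite /lcoefz /=; repeat case: ifP => ?; try done; lia. Qed.

Lemma lcoefz_lmul_window s t (lo : int) (W : nat) k :
  lo <= lval s -> k - lval t < lo + W%:Z ->
  lcoefz (lmul s t) k =
  \sum_(0 <= n < W) lcoefz s (lo + n%:Z) * lcoefz t (k - (lo + n%:Z)).
Proof.
move=> hlo hW; case: (ltP k (lval s + lval t)) => hk.
  rewrite lcoefz_lt //= big_nat_cond big1 // => n _.
  case: (ltP (lo + n%:Z) (lval s)) => h1; first by rewrite lcoefz_lt ?mul0r.
  by rewrite [lcoefz t _]lcoefz_lt ?mulr0 //; lia.
set e := absz (lval s - lo)%R; set D := absz (k - (lval s + lval t))%R.
rewrite (@eq_sum_nat_vanishing _ _ W (e + D).+1); first last.
- by move=> n hn; rewrite [lcoefz t _]lcoefz_lt ?mulr0 //; lia.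
- by move=> n hn; rewrite [lcoefz t _]lcoefz_lt ?mulr0 //; lia.
rewrite (big_cat_nat (leq0n e) (_ : e <= (e + D).+1)%N) /=; last lia.
rewrite big_nat_cond big1 ?add0r; last first.
  by move=> n /andP[/andP[_ hn] _]; rewrite lcoefz_lt ?mul0r //; lia.
rewrite -{1}[e]add0n big_addn (_ : ((e + D).+1 - e = D.+1)%N); last lia.
rewrite /lcoefz ifT //= -/D big_mkord; apply: eq_bigr => i _.
have hi := ltn_ord i; rewrite ifT; last lia; rewrite ifT; last lia.
by congr (lcoef _ _ * lcoef _ _); lia.
Qed.

Lemma lcoefz_lmulC s t k : lcoefz (lmul s t) k = lcoefz (lmul t s) k.
Proof.
rewrite /lcoefz /= [lval t + _]addrC; case: ifP => // _.
move: (absz (k - (lval s + lval t))%R) => D.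
rewrite (reindex_inj rev_ord_inj) /=; apply: eq_bigr => i _.
by rewrite mulrC; congr (_ * _); congr lcoef; have := ltn_ord i; lia.
Qed.

Lemma lcoefz_lmul_monomial s t (p k : int) :
  (forall i, i != p -> lcoefz s i = 0) -> lcoefz (lmul s t) k = lcoefz s p * lcoefz t (k - p).
Proof.
move=> hs; set lo := Order.min (lval s) p.
rewrite (@lcoefz_lmul_window s t lo (absz (k - lval t - lo)%R + absz (p - lo)%R).+1 k); try lia.
rewrite (@sum_nat_single _ _ (absz (p - lo)%R)); first by congr (lcoefz s _ * lcoefz t (k - _)); lia.
  by lia.
by move=> n hn; rewrite hs ?mul0r //; apply/eqP => e; apply: hn; lia.
Qed.

Lemma lcoefz_lmul_hbar t k : lcoefz (lmul (lhbar F) t) k = lcoefz t (k - 1).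
Proof.
rewrite (@lcoefz_lmul_monomial _ _ 1) ?lcoefz_hbar ?mul1r //.
by move=> i /negbTE hi; rewrite lcoefz_hbar hi.
Qed.

Lemma lcoefz_lmul_const a t k : lcoefz (lmul (lconst a) t) k = a * lcoefz t k.
Proof.
rewrite (@lcoefz_lmul_monomial _ _ 0) ?lcoefzC ?subr0 //.
by move=> i /negbTE hi; rewrite lcoefzC hi.
Qed.

Lemma lcoefz_lmul0 t k : lcoefz (lmul (lzero F) t) k = 0.
Proof.
by rewrite (@lcoefz_lmul_monomial _ _ 0) ?lcoefz0 ?mul0r // => i _; rewrite lcoefz0.
Qed.

End LaurentSeries.


Section ExpMultiplication.
Variable F : fieldType.
Hypothesis charF0 : [pchar F] =i pred0.
Implicit Types (a b : F) (g h : int -> F) (k lo : int).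

Definition exp_coef a (n : nat) : F := a ^+ n / (n`!)%:R.

Lemma lcoefz_lexp a (n : nat) : lcoefz (lexp a) n%:Z = exp_coef a n.
Proof. by rewrite -[n%:Z]add0r (lcoefz_val (lexp a)). Qed.

Definition vanish_below g lo := forall k, k < lo -> g k = 0.

(* The hbar^k coefficient of exp(a hbar) * (sum_q g q hbar^q), for g vanishing below lo. *)
Definition expmul a lo g k : F :=
  \sum_(0 <= n < (absz (k - lo)%R).+1) exp_coef a n * g (k - n%:Z).

Lemma expmul_widen a lo g k (W : nat) :
  vanish_below g lo -> k - W%:Z < lo ->
  expmul a lo g k = \sum_(0 <= n < W) exp_coef a n * g (k - n%:Z).
Proof.
by move=> hg hW; apply: eq_sum_nat_vanishing => n hn; rewrite hg ?mulr0 //; lia.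
Qed.

Lemma lcoefz_lmul_lexp a (t : lser F) lo k :
  vanish_below (lcoefz t) lo -> lcoefz (lmul (lexp a) t) k = expmul a lo (lcoefz t) k.
Proof.
move=> ht; set W := (absz (k - lval t)%R + absz (k - lo)%R).+1.
rewrite (@expmul_widen _ _ _ _ W) //; last lia.
rewrite (@lcoefz_lmul_window _ _ _ 0 W) //=; last lia.
by apply: eq_bigr => n _; rewrite add0r lcoefz_lexp.
Qed.

Lemma vanish_below_expmul a lo g : vanish_below g lo -> vanish_below (expmul a lo g) lo.
Proof.
by move=> hg k hk; rewrite /expmul big_nat_cond big1 // => n _; rewrite hg ?mulr0 //; lia.
Qed.

Lemma eq_expmul a lo g h k : g =1 h -> expmul a lo g k = expmul a lo h k.
Proof. by move=> gh; apply: eq_bigr => n _; rewrite gh. Qed.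

Lemma expmul_shift a lo g k :
  vanish_below g lo -> expmul a lo (fun q => g (q - 1)) k = expmul a lo g (k - 1).
Proof.
move=> hg; have hg' : vanish_below (fun q => g (q - 1)) lo by move=> q hq; apply: hg; lia.
rewrite (@expmul_widen _ _ _ k (absz (k - lo)%R).+2) //; last lia.
rewrite (@expmul_widen _ _ _ (k - 1) (absz (k - lo)%R).+2) //; last lia.
by apply: eq_bigr => n _; congr (_ * g _); lia.
Qed.

Lemma expmulZ a lo g x k : expmul a lo (fun q => x * g q) k = x * expmul a lo g k.
Proof. by rewrite /expmul mulr_sumr; apply: eq_bigr => n _; rewrite mulrCA. Qed.

Lemma expmulD a lo g h k :
  expmul a lo (fun q => g q + h q) k = expmul a lo g k + expmul a lo h k.
Proof. by rewrite /expmul -big_split; apply: eq_bigr => n _; rewrite mulrDr. Qed.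

Lemma expmulN a lo g k : expmul a lo (fun q => - g q) k = - expmul a lo g k.
Proof. by rewrite /expmul -sumrN; apply: eq_bigr => n _; rewrite mulrN. Qed.

Lemma expmul_sum (T : Type) (r : seq T) a lo (f : T -> int -> F) k :
  expmul a lo (fun q => \sum_(i <- r) f i q) k = \sum_(i <- r) expmul a lo (f i) k.
Proof. by rewrite /expmul exchange_big /=; apply: eq_bigr => n _; rewrite mulr_sumr. Qed.

Lemma expmul0 a lo k : expmul a lo (fun _ => 0) k = 0.
Proof. by rewrite /expmul big1 // => n _; rewrite mulr0. Qed.

Lemma natr_fact_neq0 n : (n`!)%:R != 0 :> F.
Proof. by rewrite (pcharf0P _).1 // -lt0n fact_gt0. Qed.

Lemma exp_coefD a b p :
  exp_coef (a + b) p = \sum_(0 <= n < p.+1) exp_coef a n * exp_coef b (p - n).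
Proof.
rewrite /exp_coef addrC exprDn big_mkord mulr_suml; apply: eq_bigr => -[i /= lt_ip] _.
have fact_split : (p`!)%:R = ('C(p, i))%:R * (i`!)%:R * ((p - i)`!)%:R :> F.
  by rewrite -!natrM -mulnA bin_fact.
rewrite fact_split -mulr_natr; field.
by rewrite !natr_fact_neq0 // (pcharf0P _).1 // -lt0n bin_gt0.
Qed.

Lemma expmulA a b lo g k :
  vanish_below g lo -> expmul a lo (expmul b lo g) k = expmul (a + b) lo g k.
Proof.
move=> hg; set T := (absz (k - lo)%R).+1.
rewrite (@expmul_widen _ _ _ k T); [|exact: vanish_below_expmul|lia].
have inner n : expmul b lo g (k - n%:Z) =
               \sum_(0 <= m < T) exp_coef b m * g (k - n%:Z - m%:Z).
  by apply: expmul_widen => //; lia.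
under eq_bigr => n _ do rewrite inner mulr_sumr.
rewrite /expmul -/T.
under [RHS]eq_bigr => p _ do rewrite exp_coefD mulr_suml.
pose h n m := exp_coef a n * exp_coef b m * g (k - (n + m)%N%:Z).
transitivity (\sum_(0 <= p < T) \sum_(0 <= n < p.+1) h n (p - n)%N); last first.
  by apply: eq_bigr => p _; apply: eq_big_nat => n /andP[_ hn]; congr (_ * g _); lia.
rewrite sum_nat_triangle; apply: eq_bigr => n _.
rewrite (@eq_sum_nat_vanishing _ _ T (T - n)).
- by apply: eq_bigr => m _; rewrite /h mulrA; congr (_ * g _); lia.
- by move=> m hm; rewrite hg ?mulr0 //; lia.
- by move=> m hm; rewrite /h hg ?mulr0 //; lia.
Qed.

End ExpMultiplication.


Section GeometricPowers.
Variables (F : fieldType) (c : F).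

Definition binom_coef (M k : nat) : F := ('C(M, k))%:R * c ^+ (M - k).

(* [x^M] (x / (1 - c x))^k *)
Definition geom_pow_coef (k M : nat) : F :=
  match k, M with
  | 0, _ => (M == 0)%:R
  | k'.+1, 0 => 0
  | k'.+1, M'.+1 => binom_coef M' k'
  end.

Lemma binom_coef0 M : binom_coef M 0 = c ^+ M.
Proof. by rewrite /binom_coef bin0 subn0 mul1r. Qed.

Lemma binom_coef_small M k : (M < k)%N -> binom_coef M k = 0.
Proof. by move=> h; rewrite /binom_coef bin_small // mul0r. Qed.

Lemma binom_coefS M k : binom_coef M.+1 k.+1 = binom_coef M k + c * binom_coef M k.+1.
Proof.
rewrite /binom_coef binS addnC natrD mulrDl subSS; congr (_ + _).
case: (ltnP k M) => h; first by rewrite mulrCA -exprS; congr (_ * _ ^+ _); lia.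
by rewrite bin_small ?mul0r ?mulr0 //; lia.
Qed.

Lemma binom_coef_absorb M k :
  (k.+1)%:R * binom_coef M.+1 k.+1 = (M.+1)%:R * binom_coef M k.
Proof. by rewrite /binom_coef !mulrA -!natrM -mul_bin_diag subSS. Qed.

Lemma geom_pow_coef_small k M : (M < k)%N -> geom_pow_coef k M = 0.
Proof. by case: k => [|k] //; case: M => [|M] //= h; apply: binom_coef_small; lia. Qed.

(* (x / (1 - c x))^(k+1) = x * (1 - c x)^-1 * (x / (1 - c x))^k *)
Lemma geom_pow_coefS k M :
  \sum_(0 <= i < M.+1) c ^+ i * geom_pow_coef k (M - i)%N = geom_pow_coef k.+1 M.+1.
Proof.
elim: M => [|M IH].
  by rewrite big_nat1 expr0 mul1r; case: k => [|k] /=; rewrite ?binom_coef0 ?binom_coef_small.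
rewrite big_nat_recl //.
under eq_bigr => i _ do rewrite exprS subSS -mulrA.
rewrite -mulr_sumr IH expr0 mul1r subn0.
by case: k {IH} => [|k] /=; rewrite ?add0r ?binom_coef0 ?exprS ?binom_coefS.
Qed.

Lemma geom_pow_coef_rec0 M :
  geom_pow_coef 0 M = (M.+1)%:R * geom_pow_coef 1 M.+1 - 2 * c * M%:R * geom_pow_coef 1 M
                      + c ^+ 2 * (M - 1)%N%:R * geom_pow_coef 1 (M - 1)%N.
Proof.
case: M => [|[|n]] /=; rewrite ?binom_coef0.
- by rewrite sub0n; ring.
- by rewrite subnn; ring.
- by rewrite subn1 /= -!natr1 !exprS; ring.
Qed.

Lemma geom_pow_coef_recS k M :
  (k.+2)%:R * geom_pow_coef k.+1 M =
  (M.+1)%:R * geom_pow_coef k.+2 M.+1 - 2 * c * M%:R * geom_pow_coef k.+2 M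
  + c ^+ 2 * (M - 1)%N%:R * geom_pow_coef k.+2 (M - 1)%N.
Proof.
case: M => [|[|n]] /=.
- by rewrite binom_coef_small //; ring.
- rewrite (@binom_coef_small 0 k.+1) //.
  case: k => [|k]; last by rewrite !binom_coef_small //; ring.
  by rewrite /binom_coef !bin0 !subn0 !expr0 bin1 subnn; ring.
- rewrite subn1 /= -[2 * c * _ * _]mulrA -[c ^+ 2 * _ * _]mulrA.
  rewrite -!binom_coef_absorb.
  rewrite (binom_coefS n.+2 k.+1) (binom_coefS n.+1 k.+1) (binom_coefS n.+1 k).
  ring.
Qed.

(* With y = x / (1 - c x): (1 - c x)^2 (y^(k+1))' = (k + 1) y^k, since y' = (1 - c x)^-2. *)
Lemma geom_pow_coef_rec k M :
  (k.+1)%:R * geom_pow_coef k M =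
  (M.+1)%:R * geom_pow_coef k.+1 M.+1 - 2 * c * M%:R * geom_pow_coef k.+1 M
  + c ^+ 2 * (M - 1)%N%:R * geom_pow_coef k.+1 (M - 1)%N.
Proof. by case: k => [|k]; [rewrite mul1r geom_pow_coef_rec0 | exact: geom_pow_coef_recS]. Qed.

End GeometricPowers.


Section SchurCoefficients.
Variables (F : fieldType) (c : F).
Hypothesis charF0 : [pchar F] =i pred0.

Definition tilde_t_series (m : nat) : lser F :=
  if m == 0%N then lzero F else ttilde_hbar c m.

Lemma lcoefz_ttilde_hbar m k : lcoefz (ttilde_hbar c m) k = if k == -1 then c ^+ m.-1 else 0.
Proof.
by rewrite /ttilde_hbar lcoefz_lmul_const lcoefz_hbarinv; case: ifP; rewrite ?mulr1 ?mulr0.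
Qed.

Lemma lcoefz_lmul_tilde_t m t k :
  lcoefz (lmul (tilde_t_series m) t) k =
  if m == 0%N then 0 else c ^+ m.-1 * lcoefz t (k + 1).
Proof.
rewrite /tilde_t_series; case: ifP => _; first exact: lcoefz_lmul0.
rewrite (@lcoefz_lmul_monomial _ _ _ (-1)) ?lcoefz_ttilde_hbar ?eqxx ?opprK //.
by move=> i /negbTE hi; rewrite lcoefz_ttilde_hbar hi.
Qed.

Lemma lcoefz_xpow k M q :
  lcoefz (xpow tilde_t_series k M) q = if q == - k%:Z then geom_pow_coef c k M else 0.
Proof.
elim: k M q => [|k IH] M q.
  by rewrite /xpow /= /xunit; case: M => [|M] /=; rewrite ?lcoefzC ?oppr0 // lcoefz0; case: ifP.
rewrite /xpow iterS -/(xpow _ k) /xmul lcoefz_lsum iota0E.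
under eq_bigr => i _ do rewrite lcoefz_lmul_tilde_t IH.
have [->|neq] := eqVneq q (- k.+1%:Z).
  rewrite (_ : (- k.+1%:Z + 1 == - k%:Z) = true); last by apply/eqP; lia.
  case: M => [|M]; first by rewrite big_nat1.
  rewrite big_nat_recl //= add0r -[binom_coef _ _ _]/(geom_pow_coef c k.+1 M.+1) -geom_pow_coefS.
  by apply: eq_bigr => i _; rewrite subSS.
rewrite (_ : (q + 1 == - k%:Z) = false); last by apply: contraNF neq => /eqP e; apply/eqP; lia.
by rewrite big1 // => i _; case: ifP; rewrite ?mulr0.
Qed.

(* The hbar^q coefficient of s_M(tilde t / hbar) = sum_k hbar^-k [x^M] (x / (1 - c x))^k / k!. *)
Definition schur_coef (M : nat) (q : int) : F :=
  if q <= 0 then geom_pow_coef c (absz q) M / ((absz q)`!)%:R else 0.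

Lemma lcoefz_schur_row M q : lcoefz (schur_row (ttilde_hbar c) M) q = schur_coef M q.
Proof.
rewrite /schur_row /xexp -/tilde_t_series lcoefz_lsum iota0E.
under eq_bigr => k _ do rewrite lcoefzZ lcoefz_xpow.
rewrite /schur_coef; case: ifP => hq; last first.
  by rewrite big1 // => n _; rewrite ifF ?mulr0 //; apply/negbTE/eqP; lia.
case: (leqP (absz q) M) => hqM.
  rewrite (@sum_nat_single _ _ (absz q)); first by rewrite ifT 1?mulrC //; apply/eqP; lia.
    by lia.
  by move=> n hn; rewrite ifF ?mulr0 //; apply/negbTE/eqP => e; apply: hn; lia.
rewrite geom_pow_coef_small // mul0r big_nat_cond big1 // => n /andP[/andP[_ hn] _].
by rewrite ifF ?mulr0 //; apply/negbTE/eqP; lia.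
Qed.

Lemma vanish_below_schur_coef M lo : lo <= - M%:Z -> vanish_below (schur_coef M) lo.
Proof.
by move=> hlo q hq; rewrite /schur_coef ifT; [rewrite geom_pow_coef_small ?mul0r //|]; lia.
Qed.

Lemma schur_coef_rec M q :
  schur_coef M q =
  M.+1%:R * schur_coef M.+1 (q - 1) - 2 * c * (M%:R * schur_coef M (q - 1))
  + c ^+ 2 * ((M - 1)%N%:R * schur_coef (M - 1)%N (q - 1)).
Proof.
rewrite /schur_coef; case: (lerP q 0) => hq.
  rewrite !ifT; try lia.
  have -> : absz (q - 1) = (absz q).+1 by lia.
  move: (absz q) => j.
  have nz_j1 : (j.+1)%:R != 0 :> F by rewrite (pcharf0P _).1.
  rewrite -[geom_pow_coef c j M](mulKf nz_j1) geom_pow_coef_rec factS natrM.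
  by field; rewrite natr_fact_neq0 // addrC natr1 nz_j1.
have [->|neq1] := eqVneq q 1.
  by rewrite subrr lexx /= !divr1; case: M => [|[|n]] /=; rewrite ?subn1 /=; ring.
have -> : (q - 1 <= 0) = false by apply/negbTE; rewrite -ltNge; lia.
by ring.
Qed.

End SchurCoefficients.


Section Operators.
Variable F : fieldType.
Implicit Types (G : nat -> lser F) (N : nat) (lo k : int).

Lemma lcoefz_op_y G N k : lcoefz (op_y G N) k = N%:R * lcoefz (G N) (k - 1).
Proof. by rewrite /op_y lcoefz_lmul_hbar lcoefzZ. Qed.

Lemma lcoefz_op_xey G N lo k :
  vanish_below (lcoefz (G N)) lo -> lcoefz (op_xey G N.+1) k = expmul N%:R lo (lcoefz (G N)) k.
Proof. by move=> h; rewrite /op_xey /op_x /op_ey /= mul1r (lcoefz_lmul_lexp _ _ h). Qed.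

Lemma lcoefz_op_eyN1 G N lo k :
  vanish_below (lcoefz (G N)) lo -> lcoefz (op_ey (-1) G N) k = expmul (- N%:R) lo (lcoefz (G N)) k.
Proof. by move=> h; rewrite /op_ey mulN1r (lcoefz_lmul_lexp _ _ h) mulrNz. Qed.

(* a is the coefficient sequence of (1 - c x)^2 b / x *)
Lemma geom_inv_sum (c : F) (a b : nat -> F) :
  b 0%N = 0 -> (forall M, a M = b M.+1 - 2 * c * b M + c ^+ 2 * b (M - 1)%N) ->
  forall N, \sum_(0 <= n < N.+1) c ^+ n * a (N - n)%N = b N.+1 - c * b N.
Proof.
move=> b0 ab; elim=> [|N IH]; first by rewrite big_nat1 expr0 mul1r subnn ab sub0n b0; ring.
rewrite big_nat_recl // expr0 mul1r subn0.
under eq_bigr => n _ do rewrite subSS exprS -mulrA.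
by rewrite -mulr_sumr IH ab subn1 /=; ring.
Qed.

Lemma geom2_inv_sum (c : F) (a b : nat -> F) :
  b 0%N = 0 -> (forall M, a M = b M.+1 - 2 * c * b M + c ^+ 2 * b (M - 1)%N) ->
  forall N, \sum_(0 <= n < N.+1) (n.+1)%:R * c ^+ n * a (N - n)%N = b N.+1.
Proof.
move=> b0 ab; elim=> [|N IH].
  by rewrite big_nat1 expr0 mulr1 mul1r subnn ab sub0n b0; ring.
rewrite big_nat_recl // expr0 mulr1 mul1r subn0.
have split_weights : \sum_(0 <= n < N.+1) (n.+2)%:R * c ^+ n.+1 * a (N.+1 - n.+1)%N
   = c * \sum_(0 <= n < N.+1) (n.+1)%:R * c ^+ n * a (N - n)%N
     + c * \sum_(0 <= n < N.+1) c ^+ n * a (N - n)%N.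
  rewrite !mulr_sumr -big_split; apply: eq_bigr => n _ /=.
  by rewrite subSS exprS -(natr1 n.+1); ring.
by rewrite split_weights IH (geom_inv_sum b0 ab) ab subn1 /=; ring.
Qed.

End Operators.

Section WaveFunction.
Variables (F : fieldType) (c : F).
Hypothesis charF0 : [pchar F] =i pred0.
Implicit Types (N : nat) (lo k : int).

Lemma natr_bin2S N : N%:R + 'C(N, 2)%:R = 'C(N.+1, 2)%:R :> F.
Proof. by rewrite binS bin1 natrD addrC. Qed.

Lemma Psi_exponent N : (N * (N - 1))%N%:R / 2 = 'C(N, 2)%:R :> F.
Proof.
have nz2 : (2 : F) != 0 by rewrite (pcharf0P _).1.
by rewrite subn1 -[N.-1]bin1 mul_bin_diag natrM mulrC mulKf.
Qed.

Lemma lcoefz_Psi N lo k :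
  lo <= - N%:Z -> lcoefz (Psi c N) k = expmul 'C(N, 2)%:R lo (schur_coef c N) k.
Proof.
move=> hlo; rewrite /Psi lcoefz_lmulC Psi_exponent (@lcoefz_lmul_lexp _ _ _ lo).
  by apply: eq_expmul => q; rewrite lcoefz_schur_row.
by move=> q hq; rewrite lcoefz_schur_row (vanish_below_schur_coef c hlo).
Qed.

Lemma vanish_below_Psi N lo : lo <= - N%:Z -> vanish_below (lcoefz (Psi c N)) lo.
Proof.
move=> hlo q hq; rewrite (lcoefz_Psi _ hlo).
exact: vanish_below_expmul (vanish_below_schur_coef c hlo) _ hq.
Qed.

Lemma lcoefz_y_Psi N lo k : lo <= - N%:Z ->
  lcoefz (op_y (Psi c) N) k = expmul 'C(N, 2)%:R lo (fun q => N%:R * schur_coef c N (q - 1)) k.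
Proof.
move=> hlo; rewrite lcoefz_op_y (lcoefz_Psi _ hlo) expmulZ -expmul_shift //.
exact: vanish_below_schur_coef.
Qed.

Lemma vanish_below_y_Psi N lo : lo <= - N%:Z -> vanish_below (lcoefz (op_y (Psi c) N)) lo.
Proof. by move=> hlo q hq; rewrite lcoefz_op_y (vanish_below_Psi hlo) ?mulr0 //; lia. Qed.

Lemma lcoefz_iter_xey_Psi n M lo q : (n <= M)%N -> lo <= - M%:Z ->
  lcoefz (iter n (@op_xey F) (Psi c) M) q = expmul 'C(M, 2)%:R lo (schur_coef c (M - n)) q.
Proof.
elim: n M q => [|n IH] M q le_nM hlo; first by rewrite /= subn0 (lcoefz_Psi _ hlo).
case: M le_nM hlo => [|M] // le_nM hlo.
have vanish_schur : vanish_below (schur_coef c (M - n)) lo.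
  by apply: vanish_below_schur_coef; lia.
rewrite iterS (@lcoefz_op_xey _ _ _ lo); last first.
  by move=> q' hq'; rewrite IH; [exact: vanish_below_expmul vanish_schur _ hq'|lia|lia].
rewrite (@eq_expmul _ _ _ _ (expmul 'C(M, 2)%:R lo (schur_coef c (M - n)))); last first.
  by move=> q'; apply: IH; lia.
by rewrite expmulA // natr_bin2S subSS.
Qed.

Lemma lcoefz_eyN1_xinv_y_Psi N k :
  lcoefz (op_ey (-1) (op_xinv (op_y (Psi c))) N) k =
  expmul 'C(N, 2)%:R (- N.+1%:Z) (fun q => N.+1%:R * schur_coef c N.+1 (q - 1)) k.
Proof.
rewrite (@lcoefz_op_eyN1 _ _ _ (- N.+1%:Z)); last exact: vanish_below_y_Psi.
rewrite /op_xinv (eq_expmul _ _ _ (fun q => lcoefz_y_Psi q (lexx _))) expmulA //.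
  by rewrite -natr_bin2S addKr.
by move=> q hq; rewrite (@vanish_below_schur_coef _ c N.+1 (- N.+1%:Z)) ?mulr0 //; lia.
Qed.

Lemma lcoefz_xey_y_Psi N k :
  lcoefz (op_xey (op_y (Psi c)) N) k =
  expmul 'C(N, 2)%:R (- N.+1%:Z) (fun q => (N - 1)%N%:R * schur_coef c (N - 1)%N (q - 1)) k.
Proof.
case: N => [|N].
  rewrite /op_xey /op_x lcoefz0 (@eq_expmul _ _ _ _ (fun _ => 0)) ?expmul0 //.
  by move=> q; rewrite sub0n mul0r.
rewrite (@lcoefz_op_xey _ _ _ (- N.+2%:Z)); last by apply: vanish_below_y_Psi; lia.
rewrite (@eq_expmul _ _ _ _ (expmul 'C(N, 2)%:R (- N.+2%:Z) (fun q => N%:R * schur_coef c N (q - 1)))); last first.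
  by move=> q; apply: lcoefz_y_Psi; lia.
rewrite expmulA ?natr_bin2S ?subn1 // => q hq.
by rewrite (@vanish_below_schur_coef _ c N (- N.+2%:Z)) ?mulr0 //; lia.
Qed.

Lemma Psi_geom2_equation :
  xzero (xadd (op_xey (op_geom2 c (Psi c))) (xopp (op_y (Psi c)))).
Proof.
move=> N k; rewrite /xadd /xopp lcoefzD lcoefzN.
case: N => [|N]; first by rewrite /op_xey /op_x lcoefz0 lcoefz_op_y mul0r oppr0 addr0.
set lo := - N.+1%:Z.
pose h q := N.+1%:R * schur_coef c N.+1 (q - 1).
have vanish_h : vanish_below h lo.
  by move=> q hq; rewrite /h (@vanish_below_schur_coef _ c N.+1 lo) ?mulr0 //; rewrite /lo in hq *; lia.
have geom2_Psi q : lcoefz (op_geom2 c (Psi c) N) q = expmul 'C(N, 2)%:R lo h q.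
  rewrite /op_geom2 lcoefz_lsum iota0E.
  under eq_big_nat => n /andP[_ lt_nN].
    rewrite lcoefzZ (@lcoefz_iter_xey_Psi n N lo q) -?expmulZ; [|lia|rewrite /lo; lia].
  over.
  rewrite -expmul_sum; apply: eq_expmul => q'.
  apply: (@geom2_inv_sum _ c (fun M => schur_coef c M q') (fun M => M%:R * schur_coef c M (q' - 1))).
  - by rewrite mul0r.
  - by move=> M; rewrite (schur_coef_rec c charF0) !mulrA.
rewrite (@lcoefz_op_xey _ _ _ lo); last first.
  by move=> q hq; rewrite geom2_Psi; exact: vanish_below_expmul vanish_h _ hq.
rewrite (eq_expmul _ _ _ geom2_Psi) expmulA // natr_bin2S.
by rewrite (@lcoefz_y_Psi N.+1 lo) ?subrr //; rewrite /lo; lia.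
Qed.

Lemma Psi_quantum_curve :
  xzero (xadd (Psi c)
           (xopp (xadd (xadd (op_ey (-1) (op_xinv (op_y (Psi c))))
                             (xscale (- (2 * c)) (op_y (Psi c))))
                       (xscale (c ^+ 2) (op_xey (op_y (Psi c))))))).
Proof.
move=> N k; rewrite /xadd /xopp /xscale !lcoefzD lcoefzN !lcoefzD !lcoefzZ.
rewrite (@lcoefz_Psi N (- N.+1%:Z)); last lia.
rewrite lcoefz_eyN1_xinv_y_Psi lcoefz_xey_y_Psi (@lcoefz_y_Psi N (- N.+1%:Z)); last lia.
rewrite -!expmulZ -expmulD -expmulD -expmulN -expmulD.
rewrite (@eq_expmul _ _ _ _ (fun _ => 0)) ?expmul0 // => q /=.
by rewrite (schur_coef_rec c charF0 N q); ring.
Qed.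

End WaveFunction.

Lemma Psi_hurwitz_equation (F : fieldType) (charF0 : [pchar F] =i pred0) :
  xzero (xadd (op_ey (-1) (op_xinv (op_y (Psi (0 : F))))) (xopp (Psi (0 : F)))).
Proof.
move=> N k; have := Psi_quantum_curve 0 charF0 N k.
rewrite /xadd /xopp /xscale !lcoefzD !lcoefzN !lcoefzD !lcoefzZ.
rewrite mulr0 oppr0 !mul0r expr0n /= mul0r !addr0 => /eqP; rewrite subr_eq0 => /eqP ->.
exact: subrr.
Qed.

Theorem mainTheorem12 (F : fieldType) (hF : [pchar F] =i pred0) (c : F) :
  xzero (xadd (op_xey (op_geom2 c (Psi c))) (xopp (op_y (Psi c))))
  /\
  xzero (xadd (Psi c)
           (xopp (xadd (xadd (op_ey (-1) (op_xinv (op_y (Psi c))))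
                             (xscale (- (2 * c)) (op_y (Psi c))))
                       (xscale (c ^+ 2) (op_xey (op_y (Psi c)))))))
  /\
  xzero (xadd (op_ey (-1) (op_xinv (op_y (Psi (0 : F))))) (xopp (Psi (0 : F)))).
Proof.
split; first exact: Psi_geom2_equation.
split; first exact: Psi_quantum_curve.
exact: Psi_hurwitz_equation.
Qed.
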